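(* Let $T$ be a positive integer, let $N=(N_l)_{0\le l\le T}$ satisfy $N_0=0$ with increments $N_{l+1}-N_l$ independent Poisson random variables with parameters $\gamma_l\ge0$, let $\mathfrak{F}=(\mathfrak{F}_k)$ be the natural augmented filtration of $N$, $I_k=(-1)^{N_k}$ (so $I_0=1$), and $u_r=\frac12(1+e^{-2\gamma_{r-1}})$, $v_r=\frac12(1-e^{-2\gamma_{r-1}})$ for $1\le r\le T$. Define the events $$\Omega_{T+1,T+1}=\{I_0=1,\dots,I_T=1\},$$ $$\Omega_{l,T+1}=\{I_0=\dots=I_{l-1}=1,\ I_l=\dots=I_T=-1\},\ 1\le l\le T,$$ $$\Omega_{l,m}=\{I_0=\dots=I_{l-1}=1,\ I_l=\dots=I_{m-1}=-1,\ I_m=1\},\ 1\le l<m\le T,$$ and $\mathcal{I}=\{(l,m);1\le l<m\le T\}\cup\{(l,T+1);1\le l\le T+1\}$. Then for every $0\le k\le T$ and $(l,m)\in\mathcal{I}$, the conditional probabilities $\mathbb{Q}_k[\Omega_{\lambda,\mu}]=\mathbb{Q}[\Omega_{\lambda,\mu}\,|\,\mathfrak{F}_k]$, $(\lambda,\mu)\in\mathcal{I}$, are constant on $\Omega_{l,m}$, with values: for $1\le\lambda<\mu\le T$, $$\mathbb{Q}_k[\Omega_{\lambda,\mu}](\Omega_{l,m})=\Big(\mathbf{1}_{k<l\wedge\lambda}+\mathbf{1}_{k\ge l\wedge\lambda}\mathbf{1}_{l=\lambda}\big(\mathbf{1}_{k<m\wedge\mu}+\mathbf{1}_{k\ge m\wedge\mu}\mathbf{1}_{m=\mu}\big)\Big)\times\Big(\mathbf{1}_{k\ge\mu}+\mathbf{1}_{\lambda\le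 k<\mu}\Big(\prod_{r=k+1}^{\mu-1}u_r\Big)v_\mu+\mathbf{1}_{k<\lambda}\Big(\prod_{r=k+1}^{\lambda-1}u_r\Big)v_\lambda\Big(\prod_{r=\lambda+1}^{\mu-1}u_r\Big)v_\mu\Big);$$ for $1\le\lambda\le T$, $$\mathbb{Q}_k[\Omega_{\lambda,T+1}](\Omega_{l,m})=\big(\mathbf{1}_{k<l\wedge\lambda}+\mathbf{1}_{k\ge l\wedge\lambda}\mathbf{1}_{l=\lambda}\mathbf{1}_{k<m}\big)\times\Big(\mathbf{1}_{k\ge\lambda}\prod_{r=k+1}^{T}u_r+\mathbf{1}_{k<\lambda}\Big(\prod_{r=k+1}^{\lambda-1}u_r\Big)v_\lambda\Big(\prod_{r=\lambda+1}^{T}u_r\Big)\Big);$$ and $$\mathbb{Q}_k[\Omega_{T+1,T+1}](\Omega_{l,m})=\mathbf{1}_{k<l}\prod_{r=k+1}^{T}u_r.$$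
   Context: For a random variable constant on an event $A$, its value on $A$ is denoted by evaluation at $A$. *)

From HB Require Import structures.
From mathcomp Require Import all_boot all_order all_algebra.
From mathcomp Require Import all_classical all_reals all_analysis.
Set Implicit Arguments. Unset Strict Implicit. Unset Printing Implicit Defensive.
Import Order.TTheory GRing.Theory Num.Theory.
Local Open Scope classical_set_scope.
Local Open Scope ring_scope.

(* Poisson probability mass function with parameter g >= 0
   (with 0^0 = 1, so that g = 0 gives the Dirac mass at 0). *)
Definition pois_pmf {R : realType} (g : R) (n : nat) : R :=
  g ^+ n / n`!%:R * expR (- g).

Section defs.
Context {d : measure_display} {Omega : measurableType d} {R : realType}.

Definition incr (N : nat -> Omega -> int) (l : nat) : Omega -> int :=
  fun w => N l.+1 w - N l w.

(* mutual independence of the increments N_{l+1}-N_l, 0 <= l < T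
   (integer-valued, so every subset of int is a measurable target set) *)
Definition indep_increments (P : probability Omega R)
    (N : nat -> Omega -> int) (T : nat) : Prop :=
  forall B : nat -> set int,
    P (\bigcap_(l in [set l | (l < T)%N]) (incr N l @^-1` B l)) =
    (\prod_(l < T) P (incr N l @^-1` B l))%E.

Definition nat_filtration (N : nat -> Omega -> int) (k : nat) : set (set Omega) :=
  <<s [set S | exists i (B : set int), (i <= k)%N /\ S = N i @^-1` B] >>.

(* augmentation by the P-null sets (traced on the measurable sets) *)
Definition augment (P : probability Omega R) (G : set (set Omega)) : set (set Omega) :=
  [set A | measurable A /\ exists B, G B /\ exists Z, measurable Z /\ P Z = 0%E /\
           (A `\` B) `|` (B `\` A) `<=` Z].

Definition cond_prob_version (P : probability Omega R) (F : set (set Omega))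
    (A : set Omega) (Y : Omega -> R) : Prop :=
  (forall B : set R, measurable B -> F (Y @^-1` B)) /\
  P.-integrable setT (EFin \o Y) /\
  forall B, F B -> P (A `&` B) = (\int[P]_(x in B) (Y x)%:E)%E.

Definition sgnI (N : nat -> Omega -> int) (k : nat) (w : Omega) : int :=
  (-1) ^+ `|N k w|%N.

(* Omega_{l,m}: I_j = 1 for j < l, I_j = -1 for l <= j < m, I_m = 1,
   all of this only for indices j <= T (so m = T+1 imposes nothing at m). *)
Definition Om (N : nat -> Omega -> int) (T l m : nat) : set Omega :=
  [set w | forall j, (j <= T)%N -> (j <= m)%N ->
     sgnI N j w = if (j < l)%N then 1 else if (j < m)%N then -1 else 1].
End defs.

Definition inI (T l m : nat) : bool :=
  [&& (1 <= l)%N, (l < m)%N & (m <= T)%N] || [&& (1 <= l)%N, (l <= T.+1)%N & m == T.+1].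

Definition ind {R : realType} (b : bool) : R := (b : nat)%:R.

Definition uu {R : realType} (g : nat -> R) (r : nat) : R := (1 + expR (-2 * g r.-1)) / 2.
Definition vv {R : realType} (g : nat -> R) (r : nat) : R := (1 - expR (-2 * g r.-1)) / 2.

Definition Qval {R : realType} (g : nat -> R) (T k lam mu l m : nat) : R :=
  let u := uu g in let v := vv g in
  if (mu <= T)%N then
    (ind (k < minn l lam)%N + ind (minn l lam <= k)%N * ind (l == lam)%N *
        (ind (k < minn m mu)%N + ind (minn m mu <= k)%N * ind (m == mu)%N))
    * (ind (mu <= k)%N
       + ind ((lam <= k) && (k < mu))%N * (\prod_(k.+1 <= r < mu) u r) * v mu
       + ind (k < lam)%N * (\prod_(k.+1 <= r < lam) u r) * v lam
           * (\prod_(lam.+1 <= r < mu) u r) * v mu)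
  else if (lam <= T)%N then
    (ind (k < minn l lam)%N + ind (minn l lam <= k)%N * ind (l == lam)%N * ind (k < m)%N)
    * (ind (lam <= k)%N * (\prod_(k.+1 <= r < T.+1) u r)
       + ind (k < lam)%N * (\prod_(k.+1 <= r < lam) u r) * v lam
           * (\prod_(lam.+1 <= r < T.+1) u r))
  else
    ind (k < l)%N * \prod_(k.+1 <= r < T.+1) u r.

From mathcomp Require Import all_boot all_order all_algebra.
From mathcomp Require Import all_classical all_reals all_analysis measurable_realfun.
From mathcomp Require Import zify ring lra.
Set Implicit Arguments. Unset Strict Implicit. Unset Printing Implicit Defensive.
Import Order.TTheory GRing.Theory Num.Theory numFieldNormedType.Exports.
Local Open Scope classical_set_scope.
Local Open Scope ring_scope.

(* On Om_{lam,mu} the sign path I_0, ..., I_T is prescribed.  The event is the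
   intersection of C, which prescribes the path up to time k (an F_k-event),
   and E, which prescribes the parities of the increments N_{j+1} - N_j for
   k <= j < mu: odd exactly at the jump times j + 1 = lam, mu.  E is independent
   of F_k (pi-lambda theorem for the cylinders of the increments before k), and
   a Poisson(g) variable is odd with probability (1 - e^{-2g}) / 2, so P(E) is
   the product of the u_r and v_r.  Hence Q_k[Om_{lam,mu}] = P(E) 1_C, and on
   Om_{l,m} the indicator of C is the deterministic factor of the formula.  Any
   other version integrates like a constant over the F_k-subsets of C and of
   its complement, hence coincides with it almost surely. *)

Lemma odd_abszD (a b : int) : odd (absz (a + b)) = odd (absz a) (+) odd (absz b).
Proof.
have := modn2 (absz a); have := modn2 (absz b); have := modn2 (absz (a + b)).
case: (odd (absz a)); case: (odd (absz b)); case: (odd (absz (a + b))) => /=; lia.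
Qed.

Lemma measurable_preimage_int d (T : measurableType d) (f : T -> int) :
  (forall z, measurable (f @^-1` [set z])) -> forall B, measurable (f @^-1` B).
Proof.
move=> mf B.
have -> : f @^-1` B = \bigcup_(z : int) f @^-1` ([set z] `&` B).
  by apply/seteqP; split => [w Bw|w [z _ [/= -> //]]]; exists (f w).
apply: countable_bigcupT_measurable (countableP _) _ => z.
have [Bz|nBz] := pselect (B z).
  by rewrite setIidl // => _ ->.
rewrite (_ : [set z] `&` B = set0) ?preimage_set0 //.
by apply/seteqP; split => // _ [/= -> ].
Qed.

Section poisson_parity.
Variable R : realType.

Definition pois_parity (g : R) (b : bool) : R :=
  if b then (1 - expR (-2 * g)) / 2 else (1 + expR (-2 * g)) / 2.

Lemma pois_parity_sum (g : R) : pois_parity g true + pois_parity g false = 1.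
Proof. by rewrite /pois_parity; field. Qed.

(* The restricted partial sums are [(S_n(g) +- S_n(-g)) / 2 * e^-g], with [S_n]
   the partial sums of the exponential series. *)
Lemma pois_parity_cvg (g : R) (b : bool) :
  series (fun n => if odd n == b then pois_pmf g n else 0) @ \oo --> pois_parity g b.
Proof.
pose s : R := if b then -1 else 1.
have -> : series (fun n => if odd n == b then pois_pmf g n else 0) =
    (fun n => (series (exp_coeff g) n + s * series (exp_coeff (- g)) n) / 2 * expR (- g)).
  apply/funext => n; rewrite /series /= big_distrr -big_split !big_distrl /=.
  apply: eq_bigr => i _; rewrite /exp_coeff /pois_pmf /= exprNn -signr_odd {}/s.
  have i_gt0 : i`!%:R != 0 :> R by rewrite pnatr_eq0 -lt0n fact_gt0.
  by case: b; case: (odd i); rewrite /= ?expr0 ?expr1; field.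
have -> : pois_parity g b = (expR g + s * expR (- g)) / 2 * expR (- g).
  have e2 : expR (- g) * expR (- g) = expR (-2 * g) by rewrite -expRD; congr expR; ring.
  have eV : expR g = (expR (- g))^-1 by rewrite -expRN opprK.
  have e0 : expR (- g) != 0 by rewrite gt_eqF ?expR_gt0.
  by rewrite /pois_parity {}/s -e2 eV; case: b; field.
have exp_cvg (x : R) : series (exp_coeff x) @ \oo --> expR x := is_cvg_series_exp_coeff x.
exact: cvgMr_tmp (cvgMr_tmp (cvgD (exp_cvg g) (cvgMl_tmp (exp_cvg (- g))))).
Qed.

Lemma pois_parity_eseries (g : R) (b : bool) :
  (\sum_(0 <= n <oo) (if odd n == b then pois_pmf g n else 0)%:E)%E = (pois_parity g b)%:E.
Proof.
have cvg_gb := @pois_parity_cvg g b.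
rewrite -(cvg_lim _ cvg_gb) // -EFin_lim; last exact: (cvgP _ cvg_gb).
by apply: congr_lim; apply/funext => n /=; rewrite /series /= sumEFin.
Qed.

(* Sigma-additivity only gives [P (X has parity b) >= pois_parity g b], since
   [X] is not assumed nonnegative; the two lower bounds add up to [1], so both
   are equalities. *)
Lemma probability_parity_pois d (T : measurableType d) (P : probability T R)
    (X : T -> int) (g : R) :
  (forall B, measurable (X @^-1` B)) ->
  (forall n : nat, P (X @^-1` [set n%:Z]) = (pois_pmf g n)%:E) ->
  forall b, P (X @^-1` [set x | odd (absz x) = b]) = (pois_parity g b)%:E.
Proof.
move=> mX PX.
pose Pb b := fine (P (X @^-1` [set x | odd (absz x) = b])).
have PbE b : P (X @^-1` [set x | odd (absz x) = b]) = (Pb b)%:E.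
  by rewrite fineK // fin_num_measure.
have lb b : pois_parity g b <= Pb b.
  rewrite -lee_fin -PbE -pois_parity_eseries.
  rewrite (_ : (\sum_(0 <= n <oo) _)%E =
      (\sum_(0 <= n <oo | n \in [set n | odd n == b]) P (X @^-1` [set n%:Z]))%E).
    rewrite -measure_bigcup //; last by move=> n m _ _ [w /= [-> []]].
    apply: le_measure; rewrite ?inE //; first exact: bigcup_measurable.
    by move=> w [n /= /eqP <- ->].
  rewrite [RHS]eseries_mkcond; apply: eq_eseriesr => n _.
  by rewrite PX; case: ifPn => [nb|/negP nb]; [rewrite mem_set|rewrite memNset].
have sum1 : Pb true + Pb false = 1.
  apply: EFin_inj; rewrite EFinD -!PbE -measureU //; last first.
    by apply/seteqP; split => w //= [-> ].
  rewrite -(probability_setT P); congr (P _); apply/seteqP; split => w //= _.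
  by case: (odd (absz (X w))); [left|right].
move=> b; rewrite PbE; congr EFin.
have := pois_parity_sum g; have := lb true; have := lb false.
by case: b; lra.
Qed.
End poisson_parity.

Section measure_facts.
Context {d : measure_display} {T : measurableType d} {R : realType} (P : probability T R).

Lemma measure_eq_null_symdiff (X1 X2 Z : set T) :
  measurable X1 -> measurable X2 -> measurable Z -> P Z = 0%E ->
  X1 `\` X2 `<=` Z -> X2 `\` X1 `<=` Z -> P X1 = P X2.
Proof.
move=> mX1 mX2 mZ PZ0 sub12 sub21.
have P0 X Y : measurable X -> measurable Y -> X `\` Y `<=` Z -> P (X `\` Y) = 0%E.
  by move=> mX mY sXY; apply: subset_measure0 PZ0 => //; exact: measurableD.
rewrite -(measureU0 mX1 (measurableD mX2 mX1) (P0 _ _ mX2 mX1 sub21)).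
rewrite -(measureU0 mX2 (measurableD mX1 mX2) (P0 _ _ mX1 mX2 sub12)).
by rewrite !setUDr !setDv !setD0 setUC.
Qed.

Definition indep_of (E : set T) := [set D | measurable D /\ P (D `&` E) = (P D * P E)%E].

Lemma dynkin_indep_of (E : set T) : measurable E -> dynkin (indep_of E).
Proof.
move=> mE; split.
- by split => //; rewrite setTI probability_setT mul1e.
- move=> D [mD PDE]; split; first exact: measurableC.
  have PE : P E = (P (D `&` E) + P (~` D `&` E))%E.
    rewrite -measureU; first by rewrite -setIUl setUv setTI.
    + exact: measurableI.
    + exact/measurableI/mE/measurableC.
    by rewrite setIACA setICr set0I.
  move: PE; rewrite probability_setC // PDE.
  rewrite -[P E]fineK ?fin_num_measure // -[P D]fineK ?fin_num_measure //.
  rewrite -[P (~` D `&` E)]fineK ?fin_num_measure //; last first.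
    exact/measurableI/mE/measurableC.
  rewrite -EFinM -EFinD => -[] PE.
  by rewrite -[(1 - _)%E]/((1 - fine (P D))%:E) -EFinM; congr EFin; lra.
- move=> F tF indepF; have mF n : measurable (F n) by have [] := indepF n.
  split; first exact: bigcupT_measurable.
  rewrite setI_bigcupl measure_bigcup //=; last 2 first.
  + by move=> n _; exact: measurableI.
  + exact: trivIset_setIr.
  rewrite measure_bigcup //= -[P E]fineK ?fin_num_measure // muleC -nneseriesZl //.
  apply: eq_eseriesr => n _; have [_ ->] := indepF n.
  by rewrite muleC fineK ?fin_num_measure.
Qed.

Lemma sigma_indep_of_pi (E : set T) (G : set (set T)) :
  measurable E -> setI_closed G -> G `<=` indep_of E -> <<s G >> `<=` indep_of E.
Proof.
move=> mE GI GE; apply: lambda_system_subset => //.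
exact/dynkin_lambda_system/dynkin_indep_of.
Qed.
End measure_facts.

Section augmentation.
Context {d : measure_display} {T : measurableType d} {R : realType} (P : probability T R).
Variable G : set (set T).
Hypothesis G_measurable : G `<=` measurable.

Lemma sub_augment : G `<=` augment P G.
Proof.
move=> A GA; split; first exact: G_measurable.
exists A; split => //; exists set0; split => //; split; first exact: measure0.
by rewrite setDv set0U.
Qed.

Lemma augmentI (B C : set T) : setI_closed G -> augment P G B -> G C ->
  augment P G (B `&` C).
Proof.
move=> GI [mB [B0 [GB0 [Z [mZ [PZ0 sZ]]]]]] GC; split.
  exact/measurableI/G_measurable.
exists (B0 `&` C); split; first exact: GI.
exists Z; split => //; split => //.
move=> w [[[Bw Cw] nB0C]|[[B0w Cw] nBC]]; apply: sZ.
  by left; split => // B0w; apply: nB0C.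
by right; split => // Bw; apply: nBC.
Qed.

Lemma augment_measureI (B : set T) : augment P G B ->
  exists2 B0, G B0 & forall X, measurable X -> P (X `&` B) = P (X `&` B0).
Proof.
move=> [mB [B0 [GB0 [Z [mZ [PZ0 sZ]]]]]]; exists B0 => // X mX.
have mB0 : measurable B0 := G_measurable GB0.
apply: (measure_eq_null_symdiff (measurableI _ _ mX mB) (measurableI _ _ mX mB0) mZ PZ0).
  by move=> w [[Xw Bw] nXB0]; apply: sZ; left; split => // B0w; apply: nXB0.
by move=> w [[Xw B0w] nXB]; apply: sZ; right; split => // Bw; apply: nXB.
Qed.
End augmentation.

Section ae_constant.
Context {d : measure_display} {T : measurableType d} {R : realType} (P : probability T R).

Lemma measure0_of_integral_gap (Y : T -> R) (S : set T) (a e : R) :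
  0 < e -> P.-integrable setT (EFin \o Y) -> measurable S ->
  (\int[P]_(x in S) (Y x)%:E = a%:E * P S)%E ->
  (forall w, S w -> a + e <= Y w) \/ (forall w, S w -> Y w + e <= a) ->
  P S = 0%E.
Proof.
move=> e_gt0 iY mS intS gap.
have iYS : P.-integrable S (EFin \o Y) by exact: integrableS iY.
have int_cst c : (\int[P]_(x in S) c%:E = c%:E * P S)%E by rewrite integral_cst.
have icst c : P.-integrable S (EFin \o cst c) := finite_measure_integrable_cst P c mS.
have PSE : P S = (fine (P S))%:E by rewrite fineK ?fin_num_measure.
have PS_ge0 : 0 <= fine (P S) by rewrite fine_ge0 ?measure_ge0.
rewrite PSE; congr EFin; case: gap => gap.
- have : ((a + e)%:E * P S <= a%:E * P S)%E.
    rewrite -[X in (_ <= X)%E]intS -int_cst.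
    apply: le_integral => //; first exact: icst.
    by move=> w /[!inE] /gap; rewrite lee_fin.
  by rewrite PSE -!EFinM lee_fin; nra.
- have : (a%:E * P S <= (a - e)%:E * P S)%E.
    rewrite -[X in (X <= _)%E]intS -int_cst.
    apply: le_integral => //; first exact: icst.
    by move=> w /[!inE] /gap; rewrite lee_fin; lra.
  by rewrite PSE -!EFinM lee_fin; nra.
Qed.

Lemma ae_eq_cst_of_integral (Y : T -> R) (G : set T) (a : R) :
  P.-integrable setT (EFin \o Y) ->
  (forall B : set R, measurable B ->
     measurable (Y @^-1` B `&` G) /\
     (\int[P]_(x in Y @^-1` B `&` G) (Y x)%:E = a%:E * P (Y @^-1` B `&` G))%E) ->
  {ae P, forall w, G w -> Y w = a}.
Proof.
move=> iY hB.
pose above n := Y @^-1` `]a + n.+1%:R^-1, +oo[ `&` G.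
pose below n := Y @^-1` `]-oo, a - n.+1%:R^-1[ `&` G.
have inv_gt0 n : 0 < n.+1%:R^-1 :> R by rewrite invr_gt0 ltr0Sn.
have above0 n : measurable (above n) /\ P (above n) = 0%E.
  have [mS intS] := hB _ (measurable_itv `]a + n.+1%:R^-1, +oo[).
  split => //; apply: (measure0_of_integral_gap (inv_gt0 n) iY mS intS); left.
  by move=> w [/=]; rewrite in_itv /= andbT => /ltW.
have below0 n : measurable (below n) /\ P (below n) = 0%E.
  have [mS intS] := hB _ (measurable_itv `]-oo, a - n.+1%:R^-1[).
  split => //; apply: (measure0_of_integral_gap (inv_gt0 n) iY mS intS); right.
  by move=> w [/=]; rewrite in_itv /= => /ltW; rewrite lerBrDr.
apply: (negligibleS (A := \bigcup_n (above n `|` below n))).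
  move=> w /= /not_implyP [Gw /eqP Yw_neq].
  case: ltgtP Yw_neq => // [Yw_lt|Yw_gt] _.
  + have [n ltn] := ltr_add_invr Yw_lt; exists n => //; right; split => //=.
    by rewrite in_itv /= ltrBrDr.
  + have [n ltn] := ltr_add_invr Yw_gt; exists n => //; left; split => //=.
    by rewrite in_itv /= andbT.
apply: negligible_bigcup => n; apply: negligibleU.
  by have [? ?] := above0 n; exists (above n); split.
by have [? ?] := below0 n; exists (below n); split.
Qed.
End ae_constant.

Lemma prod_ord_if_range (R : pzSemiRingType) (n k M : nat) (F : nat -> R) :
  (M <= n)%N ->
  \prod_(j < n) (if (k <= j < M)%N then F j else 1) = \prod_(k <= j < M) F j.
Proof.
move=> Mn; rewrite -(big_mkord xpredT (fun j => if (k <= j < M)%N then F j else 1)).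
have [Mk|kM] := leqP M k.
  by rewrite [RHS]big_geq // big1 // => j _; rewrite ifF //; lia.
rewrite (big_cat_nat (n := k)) ?(leq_trans (ltnW kM)) //=.
rewrite (big_cat_nat (n := M) (m := k)) ?(ltnW kM) //= big1_seq ?mul1r; last first.
  by move=> j /[!mem_index_iota] jk; rewrite ifF //; lia.
rewrite [X in _ * X]big1_seq ?mulr1; last first.
  by move=> j /[!mem_index_iota] jM; rewrite ifF //; lia.
by apply: eq_big_nat => j jkM; rewrite jkM.
Qed.

Lemma prod_nat_mark (R : pzSemiRingType) (u v : nat -> R) (k a n : nat) : (a < n)%N ->
  \prod_(k.+1 <= r < n) (if r == a then v r else u r) =
  if (a <= k)%N then \prod_(k.+1 <= r < n) u r
  else (\prod_(k.+1 <= r < a) u r) * v a * \prod_(a.+1 <= r < n) u r.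
Proof.
move=> an; have [ak|ka] := leqP a k.
  by apply: eq_big_nat => r kr; rewrite ifF //; lia.
rewrite (big_cat_nat (n := a)) //= ?(ltnW an) // [X in _ * X]big_ltn // eqxx mulrA.
congr (_ * _ * _); apply: eq_big_nat => r ar; rewrite ifF //; lia.
Qed.

Lemma ind_orb (R : realType) (a b : bool) : ind a + ind (~~ a) * ind b = ind (a || b) :> R.
Proof. by case: a; case: b; rewrite /ind /= ?(mulr1n, mulr0n, mul1r, mul0r, addr0, add0r). Qed.

Lemma ind_andb (R : realType) (a b : bool) : ind a * ind b = ind (a && b) :> R.
Proof. by case: a; case: b; rewrite /ind /= ?(mulr1n, mulr0n, mul1r, mul0r). Qed.

Definition jumps (lam mu r : nat) : bool := (r == lam) || (r == mu).

Section path_probability.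
Variables (R : realType) (gamma : nat -> R) (T k lam mu : nat).

Definition path_prob : R :=
  \prod_(k.+1 <= r < (minn mu T).+1) (if jumps lam mu r then vv gamma r else uu gamma r).

Definition agree (l m : nat) : bool :=
  (k < minn l lam)%N || (l == lam) && ((k < minn m mu)%N || (m == mu)).

Lemma path_prob_two_jumps : (lam < mu <= T)%N ->
  path_prob = ind (mu <= k)%N
    + ind ((lam <= k) && (k < mu))%N * (\prod_(k.+1 <= r < mu) uu gamma r) * vv gamma mu
    + ind (k < lam)%N * (\prod_(k.+1 <= r < lam) uu gamma r) * vv gamma lam
        * (\prod_(lam.+1 <= r < mu) uu gamma r) * vv gamma mu.
Proof.
move=> /andP[lt_lam_mu muT]; rewrite /path_prob (minn_idPl muT).
have [muk|kmu] := leqP mu k.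
  rewrite big_geq // (leq_trans (ltnW lt_lam_mu) muk) ltnNge (leq_trans (ltnW lt_lam_mu) muk).
  by rewrite /ind /= ?(mulr1n, mulr0n, mul0r, addr0).
rewrite big_nat_recr //= /jumps eqxx orbT.
rewrite (eq_big_nat _ _ (F2 := fun r => if r == lam then vv gamma r else uu gamma r)); last first.
  by move=> r /andP[_ rmu]; rewrite (ltn_eqF rmu) orbF.
rewrite prod_nat_mark //; case: leqP => lamk;
  by rewrite /ind /= ?(mulr1n, mulr0n, mul0r, mul1r, add0r, addr0).
Qed.

Lemma path_prob_one_jump : (lam <= T)%N -> mu = T.+1 ->
  path_prob = ind (lam <= k)%N * (\prod_(k.+1 <= r < T.+1) uu gamma r)
    + ind (k < lam)%N * (\prod_(k.+1 <= r < lam) uu gamma r) * vv gamma lam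
        * (\prod_(lam.+1 <= r < T.+1) uu gamma r).
Proof.
move=> lamT mu_T; rewrite /path_prob mu_T (minn_idPr (leqnSn T)).
rewrite (eq_big_nat _ _ (F2 := fun r => if r == lam then vv gamma r else uu gamma r)); last first.
  by move=> r /andP[_ rT]; rewrite /jumps (ltn_eqF rT) orbF.
rewrite prod_nat_mark //; case: leqP => lamk;
  by rewrite /ind /= ?(mulr1n, mulr0n, mul0r, mul1r, add0r, addr0).
Qed.

Lemma path_prob_no_jump : lam = T.+1 -> mu = T.+1 ->
  path_prob = \prod_(k.+1 <= r < T.+1) uu gamma r.
Proof.
move=> lam_T mu_T; rewrite /path_prob lam_T mu_T (minn_idPr (leqnSn T)).
by apply: eq_big_nat => r /andP[_ rT]; rewrite /jumps (ltn_eqF rT).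
Qed.

Lemma Qval_agree (l m : nat) : (k <= T)%N -> inI T lam mu -> inI T l m ->
  Qval gamma T k lam mu l m = ind (agree l m) * path_prob.
Proof.
rewrite /inI => kT hI hlm; rewrite /Qval /=; case: ifP => muT; [|case: ifP => lamT].
- rewrite path_prob_two_jumps; last by lia.
  by rewrite (leqNgt (minn l lam)) (leqNgt (minn m mu)) ind_orb -mulrA ind_andb ind_orb.
- rewrite path_prob_one_jump //; last by lia.
  rewrite (leqNgt (minn l lam)) -mulrA ind_andb ind_orb /agree.
  by congr (ind _ * _); lia.
- rewrite path_prob_no_jump; [|lia|lia].
  by congr (ind _ * _); rewrite /agree; lia.
Qed.
End path_probability.

Definition pattern (l m j : nat) : bool := (l <= j < m)%N.

Lemma pattern_succ (lam mu j : nat) :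
  (0 < lam)%N -> (j < mu)%N -> (lam < mu)%N || (j.+1 < mu)%N ->
  pattern lam mu j.+1 = pattern lam mu j (+) jumps lam mu j.+1.
Proof.
rewrite /pattern /jumps => lam_gt0 jmu lam_mu.
by case: eqP => ?; case: eqP => ? /=; rewrite ?addbT ?addbF; lia.
Qed.

Section increments.
Context {d : measure_display} {Omega : measurableType d} {R : realType}
  (P : probability Omega R) (T : nat) (gamma : nat -> R) (N : nat -> Omega -> int).
Hypotheses (N_measurable : forall l (z : int), (l <= T)%N -> measurable (N l @^-1` [set z]))
  (N0 : forall w, N 0%N w = 0)
  (incr_pois : forall l (n : nat), (l < T)%N ->
     P (incr N l @^-1` [set (n : int)]) = (pois_pmf (gamma l) n)%:E)
  (N_indep : indep_increments P N T).

Definition parity (j : nat) (w : Omega) : bool := odd (absz (N j w)).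

Lemma parity_succ j w : parity j.+1 w = parity j w (+) odd (absz (incr N j w)).
Proof. by rewrite /parity -odd_abszD /incr addrC subrK. Qed.

Lemma OmP l m w : Om N T l m w <->
  forall j, (j <= T)%N -> (j <= m)%N -> parity j w = pattern l m j.
Proof.
have sgnIE j : sgnI N j w = (-1) ^+ parity j w by rewrite /sgnI /parity signr_odd.
have patternE j : (if (j < l)%N then 1 else if (j < m)%N then -1 else 1 : int) =
    (-1) ^+ pattern l m j.
  by rewrite /pattern; case: ltnP; case: ltnP.
split => Omw j jT jm; last by rewrite sgnIE patternE Omw.
by have := Omw j jT jm; rewrite sgnIE patternE; case: (parity j w); case: (pattern l m j).
Qed.

Lemma measurable_N l B : (l <= T)%N -> measurable (N l @^-1` B).
Proof. by move=> lT; apply: measurable_preimage_int => z; exact: N_measurable. Qed.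

Lemma incr_preimage1 l z : incr N l @^-1` [set z] =
  \bigcup_(y : int) (N l @^-1` [set y] `&` N l.+1 @^-1` [set y + z]).
Proof.
apply/seteqP; split => w /=.
  by move=> <-; exists (N l w) => //=; split => //; rewrite /incr; ring.
by move=> [y _ [/= <-]]; rewrite /incr => ->; ring.
Qed.

Lemma measurable_incr l B : (l < T)%N -> measurable (incr N l @^-1` B).
Proof.
move=> lT; apply: measurable_preimage_int => z; rewrite incr_preimage1.
apply: countable_bigcupT_measurable (countableP _) _ => y.
by apply: measurableI; apply: N_measurable => //; exact: ltnW.
Qed.

Lemma probability_incr_parity l b : (l < T)%N ->
  P (incr N l @^-1` [set x | odd (absz x) = b]) = (pois_parity (gamma l) b)%:E.
Proof.
move=> lT; apply: probability_parity_pois => [B|n]; first exact: measurable_incr.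
exact: incr_pois.
Qed.

Section conditioning.
Variables (k lam mu : nat).
Hypotheses (kT : (k <= T)%N) (hI : inI T lam mu).

Let Fk := nat_filtration N k.
(* [Fk] is [<<s Fk_gen >>], so the measurable-space lemmas apply to it through
   [g_sigma_algebraType Fk_gen]. *)
Let Fk_gen := [set S | exists i (B : set int), (i <= k)%N /\ S = N i @^-1` B].

Definition past_match : set Omega :=
  [set w | forall j, (j <= k)%N -> (j <= mu)%N -> parity j w = pattern lam mu j].

Definition future_set (j : nat) : set int :=
  if (k <= j < mu)%N then [set x | odd (absz x) = jumps lam mu j.+1] else setT.

Definition future_match : set Omega :=
  \bigcap_(j in [set j | (j < T)%N]) incr N j @^-1` future_set j.

Lemma Om_past_future : Om N T lam mu = past_match `&` future_match.
Proof.
have succ j : (j < T)%N -> (j < mu)%N ->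
    pattern lam mu j.+1 = pattern lam mu j (+) jumps lam mu j.+1.
  by move: hI; rewrite /inI => lam_mu_I jT jmu; apply: pattern_succ; lia.
apply/seteqP; split => w.
  move/OmP => Omw; split => [j jk jmu|j /= jT]; first by apply: Omw => //; lia.
  rewrite /future_set; case: ifP => // /andP[kj jmu] /=.
  by rewrite -(addKb (parity j w) (odd _)) -parity_succ !Omw ?succ ?addKb //; lia.
move=> [past future]; apply/OmP; elim=> [|j IH] jT jmu; first exact: past.
have [jk|kj] := leqP j.+1 k; first exact: past.
have := future j jT; rewrite /future_set ifT /=; last by apply/andP; split.
by rewrite parity_succ IH ?succ //; lia.
Qed.

Lemma probability_future_match : P future_match = (path_prob gamma T k lam mu)%:E.
Proof.
rewrite N_indep (eq_bigr (fun j : 'I_T => (if (k <= j < minn mu T)%N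
    then pois_parity (gamma j) (jumps lam mu j.+1) else 1)%:E)); last first.
  move=> j _; have jT := ltn_ord j; rewrite /future_set.
  case: ifP => kjmu; first by rewrite ifT ?probability_incr_parity //; lia.
  by rewrite ifF ?preimage_setT ?probability_setT //; lia.
rewrite prodEFin (prod_ord_if_range _ (fun j => pois_parity (gamma j) (jumps lam mu j.+1)))
  ?geq_minr // /path_prob big_add1 /=.
by congr EFin; apply: eq_big_nat => j _; rewrite /pois_parity /uu /vv; case: jumps.
Qed.

Definition past_cylinder : set (set Omega) :=
  [set D | exists B : nat -> set int, (forall j, (k <= j)%N -> B j = setT) /\
     D = \bigcap_(j in [set j | (j < T)%N]) incr N j @^-1` B j].

Lemma past_cylinder_setI : setI_closed past_cylinder.
Proof.
move=> _ _ [B1 [B1T ->]] [B2 [B2T ->]].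
exists (fun j => B1 j `&` B2 j); split; first by move=> j kj; rewrite B1T ?B2T ?setIT.
by rewrite -bigcapI.
Qed.

Lemma past_cylinder_indep : past_cylinder `<=` indep_of P future_match.
Proof.
move=> _ [B [BT ->]]; split.
  by apply: bigcap_measurableType => j jT; exact: measurable_incr.
rewrite /future_match -bigcapI (N_indep (fun j => B j `&` future_set j)) !N_indep.
rewrite -big_split /=; apply: eq_bigr => j _.
have [jk|kj] := ltnP j k.
  by rewrite /future_set ifF ?setIT ?preimage_setT ?probability_setT ?mule1 //; lia.
by rewrite BT // setTI preimage_setT probability_setT mul1e.
Qed.

Lemma nat_filtration_sub_past_cylinder : Fk `<=` <<s past_cylinder >>.
Proof.
apply: smallest_sub; first exact: smallest_sigma_algebra.
move=> _ [i [B [ik ->]]].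
apply: (@measurable_preimage_int _ (g_sigma_algebraType past_cylinder)) => z.
elim: i ik z => [_|i IH ik] z.
  have [->|z_neq0] := eqVneq z 0.
    by rewrite (_ : _ @^-1` _ = setT) //; apply/seteqP; split => w //= _; rewrite N0.
  rewrite (_ : _ @^-1` _ = set0) //; apply/seteqP; split => w //=.
  by rewrite N0 => /esym/eqP; rewrite (negbTE z_neq0).
have -> : N i.+1 @^-1` [set z] =
    \bigcup_(y : int) (N i @^-1` [set y] `&` incr N i @^-1` [set z - y]).
  apply/seteqP; split => w /=.
    by move=> <-; exists (N i w) => //; split => //=; rewrite /incr.
  by move=> [y _ [/= Niw]]; rewrite /incr Niw => /(congr1 (+%R^~ y)); rewrite !subrK.
apply: (@countable_bigcupT_measurable _ (g_sigma_algebraType past_cylinder))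
  (countableP _) _ => y.
apply: measurableI; first by apply: IH; exact: ltnW.
apply: sub_gen_smallest; exists (fun j => if j == i then [set z - y] else setT); split.
  by move=> j kj; rewrite ifF //; lia.
apply/seteqP; split => w /=; first by move=> Xw j jT; case: eqP => // ->.
by move=> Xw; have := Xw i (leq_trans ik kT); rewrite eqxx.
Qed.

Lemma measurable_future_match : measurable future_match.
Proof. by apply: bigcap_measurableType => j jT; exact: measurable_incr. Qed.

Lemma nat_filtration_indep : Fk `<=` indep_of P future_match.
Proof.
apply: subset_trans nat_filtration_sub_past_cylinder _.
exact: sigma_indep_of_pi measurable_future_match past_cylinder_setI past_cylinder_indep.
Qed.

Lemma nat_filtration_measurable : Fk `<=` measurable.
Proof.
apply: smallest_sub; first exact: sigma_algebra_measurable.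
by move=> _ [i [B [ik ->]]]; apply: measurable_N; exact: leq_trans kT.
Qed.

Lemma nat_filtration_setI : setI_closed Fk.
Proof. by move=> A B FA FB; exact: (@measurableI _ (g_sigma_algebraType Fk_gen)). Qed.

Lemma nat_filtration_past_match : Fk past_match.
Proof.
have -> : past_match = \bigcap_(j in [set j | (j <= k)%N])
    N j @^-1` [set z | (j <= mu)%N -> odd (absz z) = pattern lam mu j].
  by apply/seteqP; split => w /= past j jk; [move=> jmu|]; apply: past.
apply: (@bigcap_measurable _ (g_sigma_algebraType Fk_gen)); first by exists 0%N.
move=> j jk; apply: sub_gen_smallest.
by exists j, [set z | (j <= mu)%N -> odd (absz z) = pattern lam mu j].
Qed.

Lemma measurable_past_match : measurable past_match.
Proof. exact: nat_filtration_measurable nat_filtration_past_match. Qed.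

Lemma probability_Om_setI (B : set Omega) : augment P Fk B ->
  P (Om N T lam mu `&` B) = ((path_prob gamma T k lam mu)%:E * P (past_match `&` B))%E.
Proof.
move=> /(augment_measureI nat_filtration_measurable) [B0 FB0 eqB].
rewrite Om_past_future eqB; last exact: measurableI measurable_past_match measurable_future_match.
rewrite [in RHS]eqB; last exact: measurable_past_match.
rewrite setIAC.
have [_ ->] := nat_filtration_indep (nat_filtration_setI nat_filtration_past_match FB0).
by rewrite probability_future_match muleC.
Qed.

Definition cond_prob_Om (w : Omega) : R := path_prob gamma T k lam mu * \1_past_match w.

Lemma nat_filtration_preimage_cond_prob_Om (B : set R) : measurable B -> Fk (cond_prob_Om @^-1` B).
Proof.
move=> mB; rewrite -[_ @^-1` _]setTI.
have : measurable_fun (setT : set (g_sigma_algebraType Fk_gen)) cond_prob_Om.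
  apply: measurable_funM; first exact: measurable_cst.
  exact: (@measurable_indic _ (g_sigma_algebraType Fk_gen)) _ _ nat_filtration_past_match.
by move/(_ measurableT B mB).
Qed.

Lemma cond_prob_Om_version : cond_prob_version P (augment P Fk) (Om N T lam mu) cond_prob_Om.
Proof.
have cond_prob_OmE : EFin \o cond_prob_Om =
    fun w => ((path_prob gamma T k lam mu)%:E * (\1_past_match w)%:E)%E.
  by apply/funext => w; rewrite /= EFinM.
have iC := integrable_indic P measurable_past_match.
split; [|split].
- move=> B mB; apply: sub_augment; first exact: nat_filtration_measurable.
  exact: nat_filtration_preimage_cond_prob_Om.
- by rewrite cond_prob_OmE; exact: integrableZl.
- move=> B [mB FB]; rewrite probability_Om_setI //.
  rewrite -[fun x => _]/(EFin \o cond_prob_Om) cond_prob_OmE integralZl //.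
    by rewrite integral_indic //; exact: measurable_past_match.
  by apply: (integrableS measurableT) => //; exact: iC.
Qed.

Lemma cond_prob_Om_ae_unique (Y : Omega -> R) :
  cond_prob_version P (augment P Fk) (Om N T lam mu) Y -> {ae P, forall w, Y w = cond_prob_Om w}.
Proof.
move=> [mY [iY intY]].
have const_on (G : set Omega) (a : R) : Fk G ->
    (forall B, augment P Fk B -> B `<=` G -> P (Om N T lam mu `&` B) = (a%:E * P B)%E) ->
    {ae P, forall w, G w -> Y w = a}.
  move=> FG PG; apply: ae_eq_cst_of_integral iY _ => B mB.
  have FBG := augmentI nat_filtration_measurable nat_filtration_setI (mY B mB) FG.
  by split; [case: FBG | rewrite -intY // PG // => w []].
have ae_in : {ae P, forall w, past_match w -> Y w = path_prob gamma T k lam mu}.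
  apply: const_on nat_filtration_past_match _ => B FB BC.
  by rewrite probability_Om_setI // setIidr.
have ae_out : {ae P, forall w, ~ past_match w -> Y w = 0}.
  apply: const_on _ => [|B FB BC].
    exact: (@measurableC _ (g_sigma_algebraType Fk_gen)) nat_filtration_past_match.
  rewrite probability_Om_setI // (_ : past_match `&` B = set0) ?measure0 ?mule0 ?mul0e //.
  by apply/seteqP; split => // w [Cw /BC].
apply: filterS2 ae_in ae_out => w Yin Yout; rewrite /cond_prob_Om indicE.
by have [Cw|nCw] := pselect (past_match w);
  [rewrite mem_set // mulr1 Yin | rewrite memNset // mulr0 Yout].
Qed.

Lemma past_match_Om (l m : nat) (w : Omega) : inI T l m -> Om N T l m w ->
  past_match w <-> agree k lam mu l m.
Proof.
move: hI kT; rewrite /inI /agree => lam_mu_I k_T hlm /OmP Omw; split => [past|agr j jk jmu].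
- have same j : (j <= k)%N -> (j <= mu)%N -> (j <= m)%N -> pattern l m j = pattern lam mu j.
    by move=> jk jmu jm; rewrite -Omw ?past //; lia.
  apply/negPn/negP => disagree.
  have := same (minn l lam); rewrite /pattern => first_jump.
  have l_lam : l = lam by apply/eqP; apply: contraNT disagree => /negbTE; lia.
  have := same (minn m mu); rewrite /pattern; lia.
- by rewrite Omw /pattern; lia.
Qed.

Lemma cond_prob_Om_on_Om (l m : nat) (w : Omega) : inI T l m -> Om N T l m w ->
  cond_prob_Om w = Qval gamma T k lam mu l m.
Proof.
move=> hlm Omw; rewrite Qval_agree // /cond_prob_Om indicE mulrC.
have [agr|disagr] := boolP (agree k lam mu l m).
  by rewrite mem_set ?(past_match_Om hlm Omw) // /ind agr.
by rewrite memNset ?(past_match_Om hlm Omw) // /ind (negbTE disagr).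
Qed.
End conditioning.
End increments.

Theorem lemma5p9 (d : measure_display) (Omega : measurableType d) (R : realType)
  (P : probability Omega R) (T : nat) (gamma : nat -> R) (N : nat -> Omega -> int) :
  (0 < T)%N ->
  (forall l, (l < T)%N -> 0 <= gamma l) ->
  (forall l (z : int), (l <= T)%N -> measurable (N l @^-1` [set z])) ->
  (forall w, N 0%N w = 0) ->
  (forall l (n : nat), (l < T)%N ->
     P (incr N l @^-1` [set (n : int)]) = (pois_pmf (gamma l) n)%:E) ->
  indep_increments P N T ->
  forall k lam mu, (k <= T)%N -> inI T lam mu ->
    let F := augment P (nat_filtration N k) in
    let A := Om N T lam mu in
    (exists Y, cond_prob_version P F A Y /\
       forall l m, inI T l m -> forall w, Om N T l m w ->
         Y w = Qval gamma T k lam mu l m) /\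
    (forall Y, cond_prob_version P F A Y ->
       forall l m, inI T l m ->
         {ae P, forall w, Om N T l m w -> Y w = Qval gamma T k lam mu l m}).
Proof.
(* The parity law of a Poisson variable holds for every real parameter. *)
move=> _ _ N_measurable N0 incr_pois N_indep k lam mu kT hI F A; split.
  exists (cond_prob_Om T gamma N k lam mu); split; first exact: cond_prob_Om_version.
  by move=> l m hlm w; exact: cond_prob_Om_on_Om.
move=> Y /(cond_prob_Om_ae_unique N_measurable N0 incr_pois N_indep kT hI) Y_ae l m hlm.
by apply: filterS Y_ae => w -> Omw; exact: cond_prob_Om_on_Om.
Qed.
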